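(* Let $A$ be a finite-dimensional Hopf algebra over $k$ (not necessarily semisimple), $\tau$ a Hopf automorphism of $A$ whose order divides the positive integer $m$. Let $\Lambda$ be a left integral of $A$ and $\lambda$ a right integral of $A^*$ with $\lambda(\Lambda)=1$. Then $$\nu_{m,\tau}(A)=\lambda\big(S(\Lambda)^{[m,\tau]}\big).$$
   Context: For $a\in A$ with $\Delta^{m-2}(a)=\sum a_1\otimes\cdots\otimes a_{m-1}$, define $P_{m-1,\tau}:A\to A$ by $P_{m-1,\tau}(a)=\sum(\tau^{m-1}\cdot a_1)(\tau^{m-2}\cdot a_2)\cdots(\tau^2\cdot a_{m-2})(\tau\cdot a_{m-1})$. The $m$th twisted Frobenius–Schur indicator of $A$ is $\nu_{m,\tau}(A)=\mathrm{Tr}(S\circ P_{m-1,\tau})$, the trace of the linear map $S\circ P_{m-1,\tau}:A\to A$, $S$ the antipode. For $h\in A$, $h^{[m,\tau]}=\sum h_1(\tau\cdot h_2)(\tau^2\cdot h_3)\cdots(\tau^{m-1}\cdot h_m)$. *)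

From HB Require Import structures.
From mathcomp Require Import all_boot all_order all_algebra all_field.
Set Implicit Arguments. Unset Strict Implicit. Unset Printing Implicit Defensive.
Import GRing.Theory.
Local Open Scope ring_scope.

(* A finite-dimensional Hopf algebra over the field k is encoded as a
   finite-dimensional unital k-algebra A (falgType k) together with
   - the structure constants cD of the coproduct in the fixed basis
     b = vbasis {:A}:  Delta(b_l) = sum_(i,j) cD l i j  b_i (x) b_j,
   - the counit eps : A -> k (linear),
   - the antipode S : 'End(A) (linear),
   subject to the Hopf algebra axioms (stated below in coordinates). *)

Section Hopf.
Variables (k : fieldType) (A : falgType k).

Definition hb : (\dim {:A}).-tuple A := vbasis {:A}.
Notation d := (\dim {:A}).
Notation bb i := (hb`_i).

Record hopf_data := HopfData {
  cD : 'I_d -> 'I_d -> 'I_d -> k;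
  eps : 'Hom(A, k^o);
  antipode : 'End(A)
}.

Variable H : hopf_data.

(* coefficient of b_i (x) b_j in Delta(a) *)
Definition Dc (a : A) (i j : 'I_d) : k :=
  \sum_(l < d) coord hb l a * cD H l i j.

Definition coassoc : Prop :=
  forall l p q r : 'I_d,
    \sum_(i < d) cD H l i r * cD H i p q = \sum_(j < d) cD H l p j * cD H j q r.

Definition counit_ax : Prop :=
  (forall a : A, \sum_(i < d) \sum_(j < d) (Dc a i j * eps H (bb i)) *: bb j = a) /\
  (forall a : A, \sum_(i < d) \sum_(j < d) (Dc a i j * eps H (bb j)) *: bb i = a).

(* Delta(a a') = Delta(a) Delta(a') and Delta(1) = 1 (x) 1 *)
Definition coprod_alg_map : Prop :=
  (forall (a a' : A) (p q : 'I_d),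
     Dc (a * a') p q
     = \sum_(i < d) \sum_(j < d) \sum_(i' < d) \sum_(j' < d)
         Dc a i j * Dc a' i' j' * coord hb p (bb i * bb i')
                                * coord hb q (bb j * bb j')) /\
  (forall p q : 'I_d, Dc 1 p q = coord hb p 1 * coord hb q 1).

Definition counit_alg_map : Prop :=
  (forall a a' : A, eps H (a * a') = eps H a * eps H a') /\ eps H 1 = 1.

Definition antipode_ax : Prop :=
  (forall a : A,
     \sum_(i < d) \sum_(j < d) Dc a i j *: (antipode H (bb i) * bb j) = eps H a *: 1)
  /\
  (forall a : A,
     \sum_(i < d) \sum_(j < d) Dc a i j *: (bb i * antipode H (bb j)) = eps H a *: 1).

Definition is_hopf : Prop :=
  [/\ coassoc, counit_ax, coprod_alg_map, counit_alg_map & antipode_ax].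

(* For n tensor factors, [sweedler n a F] is
   sum F [:: a_1; ...; a_n]  where  Delta^(n-1)(a) = sum a_1 (x) ... (x) a_n,
   with F extended multilinearly from basis tuples (Delta^(-1) := eps,
   Delta^0 := id, Delta^(n) := (Delta^(n-1) (x) id) o Delta). *)
Fixpoint sweedler (n : nat) (a : A) (F : seq A -> A) : A :=
  match n with
  | 0 => eps H a *: F [::]
  | n'.+1 => \sum_(i < d) \sum_(j < d)
               Dc a i j *: sweedler n' (bb i) (fun s => F (rcons s (bb j)))
  end.

Definition hopf_aut (tau : 'End(A)) : Prop :=
  [/\ bijective tau,
      (forall a a' : A, tau (a * a') = tau a * tau a'),
      tau 1 = 1,
      (forall (a : A) (p q : 'I_d),
         Dc (tau a) p q = \sum_(i < d) \sum_(j < d)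
             Dc a i j * coord hb p (tau (bb i)) * coord hb q (tau (bb j))) &
      (forall a : A, eps H (tau a) = eps H a)].

Definition taupow (tau : 'End(A)) (n : nat) (x : A) : A := iter n tau x.

(* P_{m-1,tau}(a) = sum (tau^{m-1} a_1)(tau^{m-2} a_2) ... (tau a_{m-1}),
   Delta^{m-2}(a) = sum a_1 (x) ... (x) a_{m-1}. *)
Definition Ptau (m : nat) (tau : 'End(A)) (a : A) : A :=
  sweedler m.-1 a
    (fun s => \prod_(l < m.-1) taupow tau (m.-1 - l) (nth 0 s l)).

Definition trace (f : A -> A) : k := \sum_(i < d) coord hb i (f (bb i)).

Definition twisted_FS_indicator (m : nat) (tau : 'End(A)) : k :=
  trace (fun a => antipode H (Ptau m tau a)).

Definition twisted_power (m : nat) (tau : 'End(A)) (h : A) : A :=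
  sweedler m h (fun s => \prod_(l < m) taupow tau l (nth 0 s l)).

Definition left_integral (L : A) : Prop := forall a : A, a * L = eps H a *: L.

(* right integral of A^*: lam * f = f(1) lam in the convolution algebra A^*,
   i.e. sum lam(a_1) f(a_2) = f(1) lam(a) for all f in A^*, a in A. *)
Definition right_integral_dual (lam : 'Hom(A, k^o)) : Prop :=
  forall (f : 'Hom(A, k^o)) (a : A),
    \sum_(i < d) \sum_(j < d) Dc a i j * lam (bb i) * f (bb j) = f 1 * lam a.

End Hopf.

From Pilot Require Import Defs.
From HB Require Import structures.
From mathcomp Require Import all_boot all_order all_algebra all_field.
Set Implicit Arguments. Unset Strict Implicit. Unset Printing Implicit Defensive.
Import GRing.Theory.
Local Open Scope ring_scope.

(* By Radford's trace formula Tr f = lam(S(Lambda_(2)) f(Lambda_(1))), which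
   comes from the dual-basis identity Lambda_(1) lam(S(Lambda_(2)) a) = a (its
   proof needs S to be injective), the indicator is
   lam(S(Lambda_(2)) S(P(Lambda_(1)))) = lam(S(P(Lambda_(1)) Lambda_(2))).
   Since S is an algebra and coalgebra anti-morphism commuting with tau,
   induction on m gives S(P_{m-1,tau}(a_(1)) a_(2)) = (S a)^[m,tau]. *)

Local Notation bilinear B := (bilinear_for *:%R *:%R B).

(* The [match] branch moves the fresh scalar [c] to the front, so that both
   sides reach the same normal form. *)
Ltac solve_linear := let c := fresh in let u := fresh in let v := fresh in
  move=> c u v; rewrite /=;
  repeat (first [rewrite scalerDl | rewrite scalerDr
                | match goal with |- context [?x *: (c *: ?w)] =>
                    rewrite (scalerA x c w) (mulrC x c) end
                | rewrite scalerA | rewrite -scalerAl | rewrite -scalerAr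
                | rewrite mulrDl | rewrite mulrDr | rewrite linearD | rewrite linearZ]);
  rewrite /= ?mulrA; done.

Section LinearFun.
Variables (k : fieldType) (V W : lmodType k) (G : V -> W).
Hypothesis linG : linear G.

Lemma linear_funD u v : G (u + v) = G u + G v.
Proof. by have := linG 1 u v; rewrite !scale1r. Qed.

Lemma linear_fun0 : G 0 = 0.
Proof. by apply: (addrI (G 0)); rewrite -linear_funD !addr0. Qed.

Lemma linear_funZ c u : G (c *: u) = c *: G u.
Proof. by rewrite -[c *: u]addr0 linG linear_fun0 addr0. Qed.

Lemma linear_fun_sum (J : finType) (f : J -> V) : G (\sum_t f t) = \sum_t G (f t).
Proof. exact: (big_morph G linear_funD linear_fun0). Qed.

End LinearFun.

Section Hopf.
Variables (k : fieldType) (A : falgType k) (H : hopf_data A).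
Local Notation I := 'I_(\dim {:A}).
Local Notation hb := (hb A).
Local Notation bb i := (hb`_i).
Local Notation S := (antipode H).
Local Notation ep := (eps H).
Local Notation Dc := (Dc H).
Local Notation co i x := (coord hb i x).

(** * Sweedler sums over a basis *)

Lemma hb_free : free hb. Proof. exact: basis_free (vbasisP _). Qed.

Lemma coord_hb (i j : I) : co j (bb i) = (i == j)%:R.
Proof. exact: coord_free hb_free. Qed.

Lemma coord_hb_sum (c : I -> k) j : co j (\sum_i c i *: bb i) = c j.
Proof. exact: coord_sum_free hb_free. Qed.

Lemma hb_expand (x : A) : x = \sum_i co i x *: bb i.
Proof. exact: coord_vbasis (memvf x). Qed.

Lemma coord_hb_inj (x y : A) : (forall j, co j x = co j y) -> x = y.
Proof. by move=> e; rewrite (hb_expand x) (hb_expand y); apply: eq_bigr => i _; rewrite e. Qed.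

Lemma linear_expand (V : lmodType k) (G : A -> V) x : linear G ->
  G x = \sum_i co i x *: G (bb i).
Proof.
move=> linG; rewrite {1}(hb_expand x) linear_fun_sum //.
by apply: eq_bigr => i _; rewrite linear_funZ.
Qed.

Lemma bilinear_expand (V : lmodType k) (B : A -> A -> V) u v : bilinear B ->
  B u v = \sum_p \sum_q (co p u * co q v) *: B (bb p) (bb q).
Proof.
case=> linBl linBr; rewrite (linear_expand u (linBl v)); apply: eq_bigr => p _.
rewrite (linear_expand v (linBr _)) scaler_sumr; apply: eq_bigr => q _.
by rewrite scalerA mulrC.
Qed.

Lemma Dc_hb (l i j : I) : Dc (bb l) i j = cD H l i j.
Proof.
rewrite /Defs.Dc (bigD1 l) //= coord_hb eqxx mul1r big1 ?addr0 // => l' /negPf nl.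
by rewrite coord_hb eq_sym nl mul0r.
Qed.

(* [cosum a F] is the Sweedler sum of [F (a_(1)) (a_(2))], for [F] given on
   pairs of basis indices. *)
Definition cosum {V : lmodType k} (a : A) (F : I -> I -> V) : V :=
  \sum_i \sum_j Dc a i j *: F i j.

Section Cosum.
Variable V : lmodType k.
Implicit Types (a x y : A) (F G : I -> I -> V).

Lemma eq_cosum a F G : (forall i j, F i j = G i j) -> cosum a F = cosum a G.
Proof. by move=> e; apply: eq_bigr => i _; apply: eq_bigr => j _; rewrite e. Qed.

Lemma cosum_linear (W : lmodType k) (h : V -> W) a F : linear h ->
  h (cosum a F) = cosum a (fun i j => h (F i j)).
Proof.
move=> linh; rewrite linear_fun_sum //; apply: eq_bigr => i _.
by rewrite linear_fun_sum //; apply: eq_bigr => j _; rewrite linear_funZ.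
Qed.

Lemma cosumZ a c F : cosum a (fun i j => c *: F i j) = c *: cosum a F.
Proof.
rewrite /cosum scaler_sumr; apply: eq_bigr => i _; rewrite scaler_sumr.
by apply: eq_bigr => j _; rewrite !scalerA mulrC.
Qed.

Lemma cosum_sum (J : finType) a (F : J -> I -> I -> V) :
  cosum a (fun i j => \sum_t F t i j) = \sum_t cosum a (F t).
Proof.
rewrite /cosum; under eq_bigr do under eq_bigr do rewrite scaler_sumr.
by under eq_bigr do rewrite exchange_big; rewrite exchange_big.
Qed.

Lemma linear_cosum F : linear (fun a => cosum a F).
Proof.
move=> c a a'; rewrite /cosum scaler_sumr -big_split; apply: eq_bigr => i _.
rewrite scaler_sumr -big_split; apply: eq_bigr => j _.
have -> : Dc (c *: a + a') i j = c * Dc a i j + Dc a' i j.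
  rewrite /Defs.Dc mulr_sumr -big_split; apply: eq_bigr => l _.
  by rewrite linearD linearZ /= mulrDl mulrA.
by rewrite scalerDl scalerA.
Qed.

Lemma linear_cosumF a (F : A -> I -> I -> V) :
  (forall i j, linear (fun x => F x i j)) -> linear (fun x => cosum a (F x)).
Proof.
move=> linF c u v; rewrite -cosumZ /cosum -big_split; apply: eq_bigr => i _.
by rewrite -big_split; apply: eq_bigr => j _; rewrite linF scalerDr.
Qed.

Lemma cosum0 a : cosum a (fun _ _ => 0 : V) = 0.
Proof. by rewrite /cosum big1 // => i _; rewrite big1 // => j _; rewrite scaler0. Qed.

Lemma cosum_scale a c F : cosum (c *: a) F = c *: cosum a F.
Proof. exact: (linear_funZ (linear_cosum F) c a). Qed.

Lemma cosum_hb (l : I) F : cosum (bb l) F = \sum_u \sum_v cD H l u v *: F u v.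
Proof. by apply: eq_bigr => u _; apply: eq_bigr => v _; rewrite Dc_hb. Qed.

Lemma cosum2E x y (F : I -> I -> I -> I -> V) :
  cosum x (fun i j => cosum y (fun i' j' => F i j i' j')) =
  \sum_i \sum_j \sum_i' \sum_j' (Dc x i j * Dc y i' j') *: F i j i' j'.
Proof.
apply: eq_bigr => i _; apply: eq_bigr => j _.
rewrite scaler_sumr; apply: eq_bigr => i' _; rewrite scaler_sumr.
by apply: eq_bigr => j' _; rewrite scalerA.
Qed.

Lemma cosumC x y (F : I -> I -> I -> I -> V) :
  cosum x (fun i j => cosum y (fun i' j' => F i j i' j')) =
  cosum y (fun i' j' => cosum x (fun i j => F i j i' j')).
Proof.
rewrite !cosum2E; under eq_bigr do rewrite exchange_big.
rewrite exchange_big; apply: eq_bigr => i' _.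
under eq_bigr do rewrite exchange_big.
rewrite exchange_big; apply: eq_bigr => j' _.
by apply: eq_bigr => i _; apply: eq_bigr => j _; rewrite mulrC.
Qed.

End Cosum.

Lemma cosum_cosuml (V : lmodType k) a (F : I -> I -> A) (G : I -> I -> V) :
  cosum (cosum a F) G = cosum a (fun i j => cosum (F i j) G).
Proof. by rewrite (cosum_linear (h := fun y => cosum y G)) //; apply: linear_cosum. Qed.

Lemma cosum_mull a (F : I -> I -> A) z : cosum a (fun i j => z * F i j) = z * cosum a F.
Proof. by rewrite (cosum_linear (h := fun y => z * y)) //; solve_linear. Qed.

Lemma cosum_mulr a (F : I -> I -> A) z : cosum a (fun i j => F i j * z) = cosum a F * z.
Proof. by rewrite (cosum_linear (h := fun y => y * z)) //; solve_linear. Qed.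

(** * The antipode *)

Section HopfAxioms.
Hypothesis hH : is_hopf H.

Lemma cosum_coassoc (V : lmodType k) a (F : I -> I -> I -> V) :
  cosum a (fun i j => cosum (bb i) (fun u v => F u v j)) =
  cosum a (fun i j => cosum (bb j) (fun u v => F i u v)).
Proof.
have coassocDc p q r : \sum_i Dc a i r * cD H i p q = \sum_j Dc a p j * cD H j q r.
  case: hH => ca _ _ _ _.
  rewrite /Defs.Dc; under eq_bigr do rewrite mulr_suml.
  under [RHS]eq_bigr do rewrite mulr_suml.
  rewrite exchange_big [RHS]exchange_big; apply: eq_bigr => l _.
  by under eq_bigr do rewrite -mulrA; under [RHS]eq_bigr do rewrite -mulrA; rewrite -!mulr_sumr ca.
under eq_cosum do rewrite cosum_hb.
under [RHS]eq_cosum do rewrite cosum_hb.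
transitivity (\sum_u \sum_v \sum_j (\sum_i Dc a i j * cD H i u v) *: F u v j).
  rewrite /cosum; under eq_bigr do under eq_bigr do rewrite scaler_sumr.
  under eq_bigr do rewrite exchange_big.
  rewrite exchange_big; apply: eq_bigr => u _.
  under eq_bigr do under eq_bigr do rewrite scaler_sumr.
  under eq_bigr do rewrite exchange_big.
  rewrite exchange_big; apply: eq_bigr => v _.
  rewrite exchange_big; apply: eq_bigr => j _.
  by rewrite scaler_suml; apply: eq_bigr => i _; rewrite scalerA.
under eq_bigr do under eq_bigr do under eq_bigr do rewrite coassocDc scaler_suml.
apply: eq_bigr => u _.
under eq_bigr do rewrite exchange_big.
rewrite exchange_big; apply: eq_bigr => j' _.
rewrite scaler_sumr; apply: eq_bigr => v _.
rewrite scaler_sumr; apply: eq_bigr => j _.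
by rewrite scalerA.
Qed.

Lemma Dc_counitl a j : \sum_i Dc a i j * ep (bb i) = co j a.
Proof.
case: hH => _ [cL _] _ _ _.
have := congr1 (coord hb j) (cL a); rewrite exchange_big /=.
by under eq_bigr do rewrite -scaler_suml; rewrite coord_hb_sum.
Qed.

Lemma Dc_counitr a i : \sum_j Dc a i j * ep (bb j) = co i a.
Proof.
case: hH => _ [_ cR] _ _ _.
have := congr1 (coord hb i) (cR a).
by under eq_bigr do rewrite -scaler_suml; rewrite coord_hb_sum.
Qed.

Lemma cosum_epsl (V : lmodType k) a (F : I -> V) :
  cosum a (fun i j => ep (bb i) *: F j) = \sum_j co j a *: F j.
Proof.
rewrite /cosum exchange_big; apply: eq_bigr => j _.
by rewrite -Dc_counitl scaler_suml; apply: eq_bigr => i _; rewrite scalerA.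
Qed.

Lemma cosum_epsr (V : lmodType k) a (F : I -> V) :
  cosum a (fun i j => ep (bb j) *: F i) = \sum_i co i a *: F i.
Proof.
apply: eq_bigr => i _.
by rewrite -Dc_counitr scaler_suml; apply: eq_bigr => j _; rewrite scalerA.
Qed.

Lemma cosum_epsl_linear (V : lmodType k) a (F : A -> V) : linear F ->
  cosum a (fun i j => ep (bb i) *: F (bb j)) = F a.
Proof. by move=> linF; rewrite cosum_epsl -linear_expand. Qed.

Lemma cosum_epsr_linear (V : lmodType k) a (F : A -> V) : linear F ->
  cosum a (fun i j => ep (bb j) *: F (bb i)) = F a.
Proof. by move=> linF; rewrite cosum_epsr -linear_expand. Qed.

Lemma cosum_antipodel a : cosum a (fun i j => S (bb i) * bb j) = ep a *: 1.
Proof. by case: hH => _ _ _ _ [aL _]; apply: aL. Qed.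

Lemma cosum_antipoder a : cosum a (fun i j => bb i * S (bb j)) = ep a *: 1.
Proof. by case: hH => _ _ _ _ [_ aR]; apply: aR. Qed.

Lemma cosum_antipodel_linear (V : lmodType k) a (G : A -> V) : linear G ->
  cosum a (fun i j => G (S (bb i) * bb j)) = ep a *: G 1.
Proof. by move=> linG; rewrite -cosum_linear // cosum_antipodel linear_funZ. Qed.

Lemma cosum_antipoder_linear (V : lmodType k) a (G : A -> V) : linear G ->
  cosum a (fun i j => G (bb i * S (bb j))) = ep a *: G 1.
Proof. by move=> linG; rewrite -cosum_linear // cosum_antipoder linear_funZ. Qed.

Lemma epsM x y : ep (x * y) = ep x * ep y.
Proof. by case: hH => _ _ _ [eM _]. Qed.

Lemma eps1 : ep 1 = 1.
Proof. by case: hH => _ _ _ [_ e1]. Qed.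

Lemma cosum1 (V : lmodType k) (B : A -> A -> V) : bilinear B ->
  cosum 1 (fun p q => B (bb p) (bb q)) = B 1 1.
Proof.
case: hH => _ _ [_ D1] _ _ linB; rewrite (bilinear_expand _ _ linB).
by apply: eq_bigr => p _; apply: eq_bigr => q _; rewrite D1.
Qed.

Lemma cosumM (V : lmodType k) x y (B : A -> A -> V) : bilinear B ->
  cosum (x * y) (fun p q => B (bb p) (bb q)) =
  cosum x (fun i j => cosum y (fun i' j' => B (bb i * bb i') (bb j * bb j'))).
Proof.
case: hH => _ _ [DM _] _ _ linB.
have pull (G : I -> I -> I -> V) : \sum_a \sum_p \sum_q G a p q = \sum_p \sum_q \sum_a G a p q.
  by rewrite exchange_big; apply: eq_bigr => p _; rewrite exchange_big.
rewrite cosum2E.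
under [RHS]eq_bigr do under eq_bigr do under eq_bigr do under eq_bigr do
  rewrite (bilinear_expand _ _ linB) scaler_sumr.
under [RHS]eq_bigr do under eq_bigr do under eq_bigr do under eq_bigr do
  under eq_bigr do rewrite scaler_sumr.
under [RHS]eq_bigr do under eq_bigr do under eq_bigr do rewrite pull.
under [RHS]eq_bigr do under eq_bigr do rewrite pull.
under [RHS]eq_bigr do rewrite pull.
rewrite [RHS]pull /cosum; apply: eq_bigr => p _; apply: eq_bigr => q _.
rewrite DM !scaler_suml; apply: eq_bigr => i _; rewrite scaler_suml; apply: eq_bigr => j _.
rewrite scaler_suml; apply: eq_bigr => i' _; rewrite scaler_suml; apply: eq_bigr => j' _.
by rewrite scalerA !mulrA.
Qed.

Lemma conv_inverse_unique (f g h : A -> A) : linear f -> linear g ->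
  (forall a, cosum a (fun i j => f (bb i) * h (bb j)) = ep a *: 1) ->
  (forall a, cosum a (fun i j => h (bb i) * g (bb j)) = ep a *: 1) ->
  f =1 g.
Proof.
move=> linf ling fh hg a.
pose E := cosum a (fun i j => cosum (bb j) (fun u v => f (bb i) * h (bb u) * g (bb v))).
have -> : f a = E.
  rewrite /E -(cosum_epsr_linear a linf); apply: eq_cosum => i j.
  under [RHS]eq_cosum do rewrite -mulrA.
  by rewrite cosum_mull hg -scalerAr mulr1.
rewrite /E -(cosum_coassoc a (fun u v j => f (bb u) * h (bb v) * g (bb j))).
rewrite -(cosum_epsl_linear a ling); apply: eq_cosum => i j.
by rewrite cosum_mulr fh -scalerAl mul1r.
Qed.

(* Maps A (x) A -> A are represented by bilinear maps A -> A -> A. *)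
Lemma conv2_inverse_unique (F G : A -> A -> A) : bilinear F -> bilinear G ->
  (forall x y, cosum x (fun i j => cosum y (fun i' j' =>
     F (bb i) (bb i') * (bb j * bb j'))) = (ep x * ep y) *: 1) ->
  (forall x y, cosum x (fun i j => cosum y (fun i' j' =>
     bb i * bb i' * G (bb j) (bb j'))) = (ep x * ep y) *: 1) ->
  forall x y, F x y = G x y.
Proof.
move=> [linFl linFr] [linGl linGr] FM MG x y.
pose E := cosum x (fun i j => cosum y (fun i' j' => cosum (bb j) (fun u v =>
  cosum (bb j') (fun u' v' => F (bb i) (bb i') * (bb u * bb u') * G (bb v) (bb v'))))).
have -> : F x y = E.
  rewrite /E -(cosum_epsr_linear x (linFl y)); apply: eq_cosum => i j.
  rewrite -(cosum_epsr_linear y (linFr (bb i))) -cosumZ; apply: eq_cosum => i' j' /=.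
  under [RHS]eq_cosum do under eq_cosum do rewrite -mulrA.
  under [RHS]eq_cosum do rewrite cosum_mull.
  by rewrite cosum_mull MG -scalerAr mulr1 scalerA.
have -> : E = cosum x (fun i j => cosum y (fun i' j' => cosum (bb i) (fun u v =>
    cosum (bb i') (fun u' v' => F (bb u) (bb u') * (bb v * bb v') * G (bb j) (bb j'))))).
  rewrite /E; under eq_cosum do rewrite cosumC.
  rewrite -cosum_coassoc.
  under eq_cosum do under eq_cosum do rewrite -cosum_coassoc.
  by under eq_cosum do rewrite cosumC.
rewrite -(cosum_epsl_linear x (linGl y)); apply: eq_cosum => i j.
rewrite -(cosum_epsl_linear y (linGr (bb j))) -cosumZ; apply: eq_cosum => i' j' /=.
under eq_cosum do rewrite cosum_mulr.
by rewrite cosum_mulr FM -scalerAl mul1r scalerA.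
Qed.

Lemma antipodeM x y : S (x * y) = S y * S x.
Proof.
apply: (conv2_inverse_unique (F := fun x y => S (x * y)) (G := fun x y => S y * S x)).
- by split=> ?; solve_linear.
- by split=> ?; solve_linear.
- move=> x' y'; rewrite -(cosumM _ _ (B := fun u v => S u * v)); last by split=> ?; solve_linear.
  by rewrite cosum_antipodel epsM.
- move=> x' y'.
  have reassoc (i j i' j' : I) :
    bb i * bb i' * (S (bb j') * S (bb j)) = bb i * (bb i' * S (bb j')) * S (bb j).
    by rewrite !mulrA.
  under eq_cosum do under eq_cosum do rewrite reassoc.
  under eq_cosum do rewrite cosum_mulr cosum_mull cosum_antipoder.
  under eq_cosum do rewrite -scalerAr mulr1 -scalerAl.
  by rewrite cosumZ cosum_antipoder scalerA mulrC.
Qed.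

Lemma antipode1 : S 1 = 1.
Proof.
rewrite -[S 1]mulr1 -(cosum1 (B := fun u v => S u * v)); last by split=> ?; solve_linear.
by rewrite cosum_antipodel eps1 scale1r.
Qed.

Lemma eps_antipode a : ep (S a) = ep a.
Proof.
have := cosum_antipodel_linear a (G := ep) ltac:(solve_linear).
rewrite eps1 -[ep a *: 1]/(ep a * 1) mulr1 => <-.
rewrite -(cosum_epsr_linear a (F := fun x => ep (S x) : k^o)); last by solve_linear.
by apply: eq_cosum => i j; rewrite epsM mulrC.
Qed.

(* The convolution product (Delta o S) * Delta * ((S (x) S) o Delta^op) in
   Hom(A, A (x) A), paired with [B]; it equals both sides of [cosum_antipode]. *)
Definition antipode_sandwich (V : lmodType k) (B : A -> A -> V) a : V :=
  cosum a (fun i j => cosum (bb i) (fun u v => cosum (bb j) (fun p q =>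
    cosum (bb p) (fun e f => cosum (S (bb q)) (fun r s =>
      B (S (bb v) * bb e * bb r) (S (bb u) * bb f * bb s)))))).

Section AntipodeCoproduct.
Variables (V : lmodType k) (B : A -> A -> V).
Hypothesis linB : bilinear B.

Let bilinear_mull X Y : bilinear (fun g h => B (X * g) (Y * h)).
Proof.
case: linB => linBl linBr; split=> [w | u] c p q /=.
  by rewrite mulrDr -scalerAr linBl.
by rewrite mulrDr -scalerAr linBr.
Qed.

Lemma antipode_sandwich_flip a :
  antipode_sandwich B a = cosum a (fun i j => B (S (bb j)) (S (bb i))).
Proof.
have eps_tail j u v : cosum (bb j) (fun p q => cosum (bb p) (fun e f => cosum (S (bb q))
    (fun r s => B (S (bb v) * bb e * bb r) (S (bb u) * bb f * bb s))))
    = ep (bb j) *: B (S (bb v)) (S (bb u)).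
  have merge p q : cosum (bb p) (fun e f => cosum (S (bb q))
      (fun r s => B (S (bb v) * bb e * bb r) (S (bb u) * bb f * bb s))) =
      cosum (bb p * S (bb q)) (fun g h => B (S (bb v) * bb g) (S (bb u) * bb h)).
    rewrite (cosumM _ _ (bilinear_mull (S (bb v)) (S (bb u)))).
    by apply: eq_cosum => e f; apply: eq_cosum => r s; rewrite !mulrA.
  rewrite (eq_cosum _ merge) (cosum_antipoder_linear _
    (G := fun z => cosum z (fun g h => B (S (bb v) * bb g) (S (bb u) * bb h))));
    last exact: linear_cosum.
  by rewrite (cosum1 (bilinear_mull (S (bb v)) (S (bb u)))) !mulr1.
rewrite /antipode_sandwich (eq_cosum _ (fun i j => eq_cosum _ (fun u v => eps_tail j u v))).
under eq_cosum do rewrite cosumZ.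
by rewrite (cosum_epsr_linear a (F := fun x => cosum x (fun u v => B (S (bb v)) (S (bb u)))));
  last exact: linear_cosum.
Qed.

Lemma antipode_sandwich_coprod a :
  antipode_sandwich B a = cosum (S a) (fun p q => B (bb p) (bb q)).
Proof.
case: linB => linBl linBr.
rewrite /antipode_sandwich.
under eq_cosum do under eq_cosum do rewrite cosum_coassoc.
rewrite (cosum_coassoc a (fun u v j => cosum (bb j) (fun e w => cosum (bb w) (fun f q =>
  cosum (S (bb q)) (fun r s => B (S (bb v) * bb e * bb r) (S (bb u) * bb f * bb s)))))).
have middle u z : cosum (bb z) (fun v j => cosum (bb j) (fun e w => cosum (bb w) (fun f q =>
    cosum (S (bb q)) (fun r s => B (S (bb v) * bb e * bb r) (S (bb u) * bb f * bb s))))) =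
    cosum (bb z) (fun f q => cosum (S (bb q)) (fun r s => B (bb r) (S (bb u) * bb f * bb s))).
  rewrite -(cosum_coassoc (bb z) (fun v e w => cosum (bb w) (fun f q => cosum (S (bb q))
    (fun r s => B (S (bb v) * bb e * bb r) (S (bb u) * bb f * bb s))))).
  rewrite -[RHS](cosum_epsl_linear (bb z) (F := fun x => cosum x (fun f q =>
    cosum (S (bb q)) (fun r s => B (bb r) (S (bb u) * bb f * bb s))))); last exact: linear_cosum.
  apply: eq_cosum => t w; rewrite (cosum_antipodel_linear _ (G := fun x => cosum (bb w)
    (fun f q => cosum (S (bb q)) (fun r s => B (x * bb r) (S (bb u) * bb f * bb s))))).
    by congr (_ *: _); apply: eq_cosum => f q; apply: eq_cosum => r s; rewrite mul1r.
  apply: linear_cosumF => f q; apply: linear_cosumF => r s c x y.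
  by rewrite mulrDl -scalerAl linBl.
rewrite (eq_cosum _ middle) -(cosum_coassoc a (fun u f q =>
  cosum (S (bb q)) (fun r s => B (bb r) (S (bb u) * bb f * bb s)))).
rewrite -(cosum_epsl_linear a (F := fun x => cosum (S x) (fun r s => B (bb r) (bb s))));
  last by move=> c x y; rewrite linearD linearZ /=; apply: linear_cosum.
apply: eq_cosum => y q.
rewrite (cosum_antipodel_linear _
  (G := fun x => cosum (S (bb q)) (fun r s => B (bb r) (x * bb s)))).
  by congr (_ *: _); apply: eq_cosum => r s; rewrite mul1r.
apply: linear_cosumF => r s c x z.
by rewrite mulrDl -scalerAl linBr.
Qed.

Lemma cosum_antipode a :
  cosum (S a) (fun p q => B (bb p) (bb q)) = cosum a (fun i j => B (S (bb j)) (S (bb i))).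
Proof. by rewrite -antipode_sandwich_coprod antipode_sandwich_flip. Qed.

End AntipodeCoproduct.

Section HopfAutomorphism.
Variable tau : 'End(A).
Hypothesis htau : hopf_aut H tau.

Lemma cosum_hopf_aut (V : lmodType k) z (B : A -> A -> V) : bilinear B ->
  cosum (tau z) (fun p q => B (bb p) (bb q)) =
  cosum z (fun i j => B (tau (bb i)) (tau (bb j))).
Proof.
case: htau => _ _ _ Dtau _ linB; rewrite /cosum.
under eq_bigr do under eq_bigr do rewrite Dtau scaler_suml.
under eq_bigr do rewrite exchange_big.
rewrite exchange_big; apply: eq_bigr => i _.
under eq_bigr do under eq_bigr do rewrite scaler_suml.
under eq_bigr do rewrite exchange_big.
rewrite exchange_big; apply: eq_bigr => j _.
rewrite (bilinear_expand _ _ linB) scaler_sumr; apply: eq_bigr => p _.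
by rewrite scaler_sumr; apply: eq_bigr => q _; rewrite scalerA !mulrA.
Qed.

Lemma hopf_aut_antipode a : tau (S a) = S (tau a).
Proof.
case: (htau) => _ tauM tau1 _ eps_tau.
apply: (conv_inverse_unique (f := fun x => tau (S x)) (g := fun x => S (tau x)) (h := tau));
  try by solve_linear.
  move=> x; under eq_cosum do rewrite -tauM.
  by rewrite -(cosum_linear (h := tau)) ?cosum_antipodel ?linearZ /= ?tau1 //; solve_linear.
move=> x; rewrite -(cosum_hopf_aut x (B := fun u v => u * S v)); last by split=> ?; solve_linear.
by rewrite cosum_antipoder eps_tau.
Qed.

End HopfAutomorphism.

(** * Integrals and the trace formula *)

Section Integrals.
Variables (L : A) (lam : 'Hom(A, k^o)).
Hypotheses (hL : left_integral H L) (hlam : right_integral_dual H lam) (hnorm : lam L = 1).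

Let bilinear_lam : bilinear (fun p q : A => lam p *: q).
Proof. by split=> ?; solve_linear. Qed.

Lemma cosum_right_integral x : cosum x (fun i j => lam (bb i) *: bb j) = lam x *: 1.
Proof.
apply: coord_hb_inj => q.
have := hlam (linfun (coord hb q : A -> k^o)) x; rewrite !lfunE /= => e.
rewrite linearZ /= [X in _ = X]mulrC -e.
rewrite /cosum linear_sum; apply: eq_bigr => i _; rewrite linear_sum; apply: eq_bigr => j _.
by rewrite lfunE !linearZ /= mulrA.
Qed.

Lemma cosum_lamS_swap a x :
  cosum a (fun i j => lam (S (bb j) * x) *: bb i) =
  cosum x (fun i j => lam (S a * bb i) *: bb j).
Proof.
have split_lam i j : lam (S (bb j) * x) *: bb i = cosum (bb j) (fun u v =>
    cosum x (fun u' v' => lam (S (bb v) * bb u') *: (bb i * S (bb u) * bb v'))).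
  rewrite -[bb i in LHS]mulr1 scalerAr -cosum_right_integral.
  rewrite (cosumM _ _ bilinear_lam).
  rewrite (cosum_antipode _
    (B := fun u v => cosum x (fun u' v' => lam (u * bb u') *: (v * bb v'))));
    last by split=> ?; apply: linear_cosumF => u' v'; solve_linear.
  rewrite -cosum_mull; apply: eq_cosum => u v; rewrite -cosum_mull.
  by apply: eq_cosum => u' v'; rewrite -scalerAr !mulrA.
rewrite (eq_cosum _ split_lam).
rewrite -(cosum_coassoc a (fun i u v => cosum x (fun u' v' =>
  lam (S (bb v) * bb u') *: (bb i * S (bb u) * bb v')))).
rewrite -(cosum_epsl_linear a (F := fun z => cosum x (fun u' v' => lam (S z * bb u') *: bb v')));
  last by apply: linear_cosumF => u' v'; solve_linear.
apply: eq_cosum => t v.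
rewrite (cosum_antipoder_linear _ (G := fun y => cosum x (fun u' v' =>
  lam (S (bb v) * bb u') *: (y * bb v')))); last by apply: linear_cosumF => u' v'; solve_linear.
by congr (_ *: _); apply: eq_cosum => u' v'; rewrite mul1r.
Qed.

(* a = a_(1) lam(S(S(a_(2)) a_(3)) L), rearranged so that a enters only through
   the left-hand sides of [cosum_lamS_swap], which depend on a via S a alone. *)
Lemma integral_expand a : a = \sum_(p : I) cosum
  (cosum a (fun i j => lam (S (bb j) * (S (S (bb p)) * L)) *: bb i))
  (fun u v => co p (bb v) *: bb u).
Proof.
pose E := cosum a (fun i j => cosum (bb i) (fun u v =>
  lam (S (bb j) * S (S (bb v)) * L) *: bb u)).
have aE : a = E.
  rewrite /E (cosum_coassoc a (fun u v j => lam (S (bb j) * S (S (bb v)) * L) *: bb u)).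
  rewrite -[LHS](cosum_epsr_linear a (F := id)) //; apply: eq_cosum => u w.
  under [RHS]eq_cosum do rewrite -antipodeM.
  rewrite (cosum_antipodel_linear _ (G := fun y => lam (S y * L) *: bb u)); last by solve_linear.
  by rewrite antipode1 mul1r hnorm scale1r.
rewrite [LHS]aE /E; under [RHS]eq_bigr do rewrite cosum_cosuml.
rewrite -(cosum_sum a); apply: eq_cosum => i j.
under [RHS]eq_bigr do rewrite cosum_scale -cosumZ.
rewrite -(cosum_sum (bb i)); apply: eq_cosum => u v.
rewrite -mulrA (linear_expand (bb v) (G := fun y => lam (S (bb j) * (S (S y) * L)) : k^o));
  last by solve_linear.
by rewrite scaler_suml; apply: eq_bigr => p _; rewrite scalerA mulrC.
Qed.

Lemma antipode_inj : injective S.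
Proof.
move=> x y Sxy; apply/eqP; rewrite -subr_eq0; apply/eqP.
have S0 : S (x - y) = 0 by rewrite linearB /= Sxy subrr.
rewrite [x - y]integral_expand big1 // => p _.
rewrite cosum_lamS_swap S0.
rewrite -[RHS](linear_fun0 (linear_cosum (fun u v => co p (bb v) *: bb u))); congr cosum.
rewrite -[RHS](cosum0 A (S (S (bb p)) * L)); apply: eq_cosum => i j.
by rewrite mul0r linear0 scale0r.
Qed.

(* [frame a] is Lambda_(1) lam(S(Lambda_(2)) a); [frame_id] says that the
   pairs (Lambda_(1), lam(S(Lambda_(2)) _)) form a dual basis of A. *)
Definition frame a := cosum L (fun p q => lam (S (bb q) * a) *: bb p).

Let linear_frame : linear frame.
Proof. by apply: linear_cosumF => p q; solve_linear. Qed.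

Lemma frameM a : frame a = a * frame 1.
Proof.
have linB (j : I) : bilinear (fun u v : A => lam (S v * bb j) *: u).
  by split=> ?; solve_linear.
have eps_tail u w : cosum (bb w) (fun v j => cosum L (fun u' v' =>
    lam (S (bb v') * (S (bb v) * bb j)) *: (bb u * bb u'))) =
    ep (bb w) *: cosum L (fun u' v' => lam (S (bb v') * 1) *: (bb u * bb u')).
  rewrite (cosum_antipodel_linear _ (G := fun y => cosum L (fun u' v' =>
    lam (S (bb v') * y) *: (bb u * bb u')))) //.
  by apply: linear_cosumF => u' v'; solve_linear.
transitivity (cosum a (fun i j => cosum (bb i * L) (fun p q => lam (S (bb q) * bb j) *: bb p))).
  under [RHS]eq_cosum do rewrite hL cosum_scale.
  by rewrite (cosum_epsl_linear a linear_frame).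
rewrite (eq_cosum _ (fun i j => cosumM (bb i) L (linB j))).
under eq_cosum do under eq_cosum do under eq_cosum do rewrite antipodeM -mulrA.
rewrite (cosum_coassoc a (fun u v j => cosum L (fun u' v' =>
  lam (S (bb v') * (S (bb v) * bb j)) *: (bb u * bb u')))) (eq_cosum _ eps_tail).
rewrite (cosum_epsr_linear a (F := fun x => cosum L (fun u' v' =>
  lam (S (bb v') * 1) *: (x * bb u')))); last by apply: linear_cosumF => u' v'; solve_linear.
by rewrite /frame -cosum_mull; apply: eq_cosum => p q; rewrite scalerAr.
Qed.

Lemma frame1 : frame 1 = 1.
Proof.
set c := lam (S L).
have S2frame : S (S (frame 1)) = c *: 1.
  have := cosum_right_integral (S L).
  rewrite (cosum_antipode bilinear_lam) => /(congr1 S).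
  rewrite linearZ /= antipode1 => <-.
  rewrite /frame !(cosum_linear (h := S)) //; try by solve_linear.
  by apply: eq_cosum => p q; rewrite mulr1 !linearZ.
have frame1E : frame 1 = c *: 1.
  by apply: antipode_inj; apply: antipode_inj; rewrite S2frame !linearZ /= !antipode1.
have LT : L * frame 1 = L.
  rewrite -frameM -[RHS](cosum_epsr_linear L (F := id)) //.
  apply: eq_cosum => p q; rewrite hL linearZ /= hnorm eps_antipode.
  by rewrite -[_ *: 1]/(_ * 1) mulr1.
have c1 : c = 1.
  apply/eqP; rewrite -subr_eq0; apply/eqP.
  have : (c - 1) *: L = 0.
    by rewrite scalerBl scale1r -{2}LT frame1E -scalerAr mulr1 subrr.
  move/eqP; rewrite scaler_eq0 => /orP [/eqP // | /eqP L0].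
  by move: hnorm; rewrite L0 linear0 => /eqP; rewrite eq_sym oner_eq0.
by rewrite frame1E c1 scale1r.
Qed.

Lemma frame_id a : frame a = a.
Proof. by rewrite frameM frame1 mulr1. Qed.

Lemma trace_integral (f : A -> A) : linear f ->
  trace f = cosum L (fun p q => lam (S (bb q) * f (bb p)) : k^o).
Proof.
move=> linf; rewrite /trace.
transitivity (\sum_(i : I) cosum L (fun p q => lam (S (bb q) * bb i) * co i (f (bb p)) : k^o)).
  apply: eq_bigr => i _.
  rewrite -{1}(frame_id (bb i)) /frame (cosum_linear (h := f)) //.
  rewrite (cosum_linear (h := fun y => co i y : k^o)); last by solve_linear.
  by apply: (@eq_cosum k^o) => p q; rewrite linear_funZ // linearZ.
rewrite -(cosum_sum L); apply: (@eq_cosum k^o) => p q.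
rewrite (linear_expand (f (bb p)) (G := fun y => lam (S (bb q) * y) : k^o));
  last by solve_linear.
by apply: eq_bigr => i _; rewrite mulrC.
Qed.

End Integrals.

(** * Twisted powers *)

Local Notation sweedler := (sweedler H).

Lemma sweedler0 a F : sweedler 0 a F = ep a *: F [::].
Proof. by []. Qed.

Lemma sweedlerS n a F :
  sweedler n.+1 a F = cosum a (fun i j => sweedler n (bb i) (fun s => F (rcons s (bb j)))).
Proof. by []. Qed.

Lemma eq_sweedler n a F G : (forall s, size s = n -> F s = G s) ->
  sweedler n a F = sweedler n a G.
Proof.
elim: n a F G => [|n IH] a F G e; first by rewrite !sweedler0 e.
rewrite !sweedlerS; apply: eq_cosum => i j; apply: IH => s hs.
by apply: e; rewrite size_rcons hs.
Qed.

Lemma sweedler_linear n (h : A -> A) a F : linear h ->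
  h (sweedler n a F) = sweedler n a (fun s => h (F s)).
Proof.
elim: n a F => [|n IH] a F linh; first by rewrite !sweedler0 linear_funZ.
rewrite !sweedlerS cosum_linear //; apply: eq_cosum => i j; exact: IH.
Qed.

Lemma linear_sweedler n F : linear (fun a => sweedler n a F).
Proof. by case: n => [|n]; [solve_linear | apply: linear_cosum]. Qed.

Lemma sweedlerS_cons n a F :
  sweedler n.+1 a F = cosum a (fun i j => sweedler n (bb j) (fun s => F (bb i :: s))).
Proof.
elim: n a F => [|n IH] a F.
  rewrite sweedlerS (eq_cosum _ (fun i j => sweedler0 _ _)).
  by rewrite (eq_cosum _ (fun i j => sweedler0 (bb j) _)) cosum_epsl cosum_epsr.
rewrite sweedlerS (eq_cosum _ (fun i j => IH (bb i) _)).
rewrite (cosum_coassoc a (fun u v j => sweedler n (bb v) (fun s => F (bb u :: rcons s (bb j))))).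
by apply: eq_cosum => i j; rewrite sweedlerS.
Qed.

Section TwistedPower.
Variable tau : 'End(A).
Hypothesis htau : hopf_aut H tau.

Let tauM x y : tau (x * y) = tau x * tau y.
Proof. by case: htau. Qed.

Let tau1 : tau 1 = 1.
Proof. by case: htau. Qed.

Let tau_prod n (f : 'I_n -> A) : tau (\prod_(l < n) f l) = \prod_(l < n) tau (f l).
Proof. exact: (big_morph tau tauM tau1). Qed.

Lemma PtauE n a : Ptau H n.+1 tau a =
  sweedler n a (fun s => \prod_(l < n) taupow tau (n - l) (nth 0 s l)).
Proof. by []. Qed.

Lemma twisted_powerS n x :
  twisted_power H n.+1 tau x = cosum x (fun i j => bb i * tau (twisted_power H n tau (bb j))).
Proof.
rewrite /twisted_power sweedlerS_cons; apply: eq_cosum => i j.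
rewrite (sweedler_linear _ (h := fun y => bb i * tau y)); last by solve_linear.
by apply: eq_sweedler => s _; rewrite big_ord_recl /= tau_prod.
Qed.

Lemma PtauS n a :
  Ptau H n.+2 tau a = tau (cosum a (fun i j => Ptau H n.+1 tau (bb i) * bb j)).
Proof.
rewrite PtauE sweedlerS cosum_linear; last by solve_linear.
apply: eq_cosum => i j; rewrite PtauE.
rewrite (sweedler_linear _ (h := fun y => y * bb j)); last by solve_linear.
rewrite [RHS](sweedler_linear _ (h := tau)); last by solve_linear.
apply: eq_sweedler => s hs; rewrite big_ord_recr /= tauM tau_prod.
congr (_ * _).
  apply: eq_bigr => l _; rewrite nth_rcons hs ltn_ord subSn; last exact: ltnW.
  by rewrite /taupow iterS.
by rewrite nth_rcons hs ltnn eqxx subSn // subnn.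
Qed.

Lemma antipode_cosum_Ptau n a :
  S (cosum a (fun i j => Ptau H n.+1 tau (bb i) * bb j)) = twisted_power H n.+1 tau (S a).
Proof.
elim: n a => [|n IH] a.
  rewrite twisted_powerS.
  transitivity (S a).
    congr (S _); rewrite -[RHS](cosum_epsl_linear a (F := id)) //.
    by apply: eq_cosum => i j; rewrite PtauE sweedler0 big_ord0 -scalerAl mul1r.
  rewrite -[LHS](cosum_epsr_linear (S a) (F := id)) //; apply: eq_cosum => i j.
  by rewrite /twisted_power sweedler0 big_ord0 linearZ /= tau1 -scalerAr mulr1.
rewrite cosum_linear; last by solve_linear.
under eq_cosum do rewrite antipodeM PtauS -(hopf_aut_antipode htau) IH.
rewrite twisted_powerS (cosum_antipode _ (B := fun u v => u * tau (twisted_power H n.+1 tau v))) //.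
split=> w; first by solve_linear.
move=> c x y /=; rewrite /twisted_power (linear_sweedler _ _ c x y) linearD linearZ /=.
by rewrite mulrDr -scalerAr.
Qed.

End TwistedPower.

End HopfAxioms.
End Hopf.

Theorem theorem5p1 (k : fieldType) (A : falgType k) (H : hopf_data A)
  (hH : is_hopf H) (tau : 'End(A)) (htau : hopf_aut H tau)
  (m : nat) (hm : (0 < m)%N) (hord : forall a : A, iter m tau a = a)
  (L : A) (hL : left_integral H L)
  (lam : 'Hom(A, k^o)) (hlam : right_integral_dual H lam)
  (hnorm : lam L = 1) :
  twisted_FS_indicator H m tau = lam (twisted_power H m tau (antipode H L)).
Proof.
case: m hm hord => // n _ _.
rewrite /twisted_FS_indicator (trace_integral hH hL hlam hnorm); last first.
  by move=> c x y; rewrite /Ptau /= (linear_sweedler H n) linearD linearZ.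
rewrite -(antipode_cosum_Ptau hH htau n L).
rewrite (@cosum_linear _ _ H _ _ (fun y => lam (antipode H y) : k^o)); last by solve_linear.
by apply: (@eq_cosum _ _ H k^o) => p q; rewrite (antipodeM hH).
Qed.
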